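(* Let $B_n$ be the number of bidirectional ballot sequences of length $n$. Then $B_n=\Omega(2^n/n)$.
   Context: A 0-1 sequence of length $n$ is a bidirectional ballot sequence if every nonempty prefix and every nonempty suffix of it contains strictly more 1's than 0's. *)

From mathcomp Require Import all_boot.
Set Implicit Arguments. Unset Strict Implicit. Unset Printing Implicit Defensive.

(* A 0-1 sequence is encoded as a seq bool: true = 1, false = 0. *)
Definition ones (s : seq bool) : nat := count id s.
Definition zeros (s : seq bool) : nat := count negb s.

Definition bidirectional_ballot (s : seq bool) : bool :=
  [forall k : 'I_(size s).+1,
     (0 < k) ==> (zeros (take k s) < ones (take k s))
             && (zeros (drop (size s - k) s) < ones (drop (size s - k) s))].

Definition B (n : nat) : nat :=
  #|[set t : n.-tuple bool | bidirectional_ballot t]|.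

From mathcomp Require Import all_boot zify ring.

Set Implicit Arguments.
Unset Strict Implicit.
Unset Printing Implicit Defensive.

(* Being a ballot sequence and being a reversed ballot sequence are both increasing
   events on the Boolean cube, so by Harris' inequality B_n 2^n >= A_n^2, where
   A_n = C(n-1, ceil((n-1)/2)) is the number of ballot sequences of length n
   (reflection principle). The estimate C(2k,k)^2 (4k+1) >= 16^k then gives
   A_n^2 >= 4^n / (32 n). *)

Fixpoint bool_seqs (n : nat) : seq (seq bool) :=
  if n is m.+1 then map (cons false) (bool_seqs m) ++ map (cons true) (bool_seqs m)
  else [:: [::]].

Lemma mem_map_cons (b c : bool) s L :
  (b :: s \in map (cons c) L) = (b == c) && (s \in L).
Proof.
apply/mapP/andP => [[t tL [-> ->]]|[/eqP-> sL]]; last by exists s.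
by rewrite eqxx.
Qed.

Lemma mem_bool_seqs n s : (s \in bool_seqs n) = (size s == n).
Proof.
elim: n s => [|n IH] [|b s] //=; rewrite mem_cat.
- by apply/negbTE; rewrite negb_or; apply/andP; split; apply/mapP => -[].
- by rewrite !mem_map_cons IH eqSS; case: b; rewrite ?orbF.
Qed.

Lemma uniq_bool_seqs n : uniq (bool_seqs n).
Proof.
elim: n => //= n IH; rewrite cat_uniq !map_inj_uniq ?IH //=; try by move=> ? ? [].
rewrite andbT; apply/hasPn => _ /mapP[s _ ->]; by rewrite mem_map_cons.
Qed.

Lemma perm_bool_seqs n l :
  uniq l -> (forall s, (s \in l) = (size s == n)) -> perm_eq l (bool_seqs n).
Proof.
move=> ul ml; apply: uniq_perm ul (uniq_bool_seqs n) _ => s.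
by rewrite ml mem_bool_seqs.
Qed.

Lemma count_bool_seqsS (P : pred (seq bool)) n :
  count P (bool_seqs n.+1) =
  count (fun s => P (false :: s)) (bool_seqs n) + count (fun s => P (true :: s)) (bool_seqs n).
Proof. by rewrite /= count_cat !count_map. Qed.

Lemma count_bool_seqs_rev (P : pred (seq bool)) n :
  count (P \o rev) (bool_seqs n) = count P (bool_seqs n).
Proof.
rewrite -count_map; apply/permP/perm_bool_seqs => [|s].
  by rewrite (map_inj_uniq (can_inj revK)) uniq_bool_seqs.
apply/mapP/eqP => [[t + ->]|<-]; first by rewrite mem_bool_seqs size_rev => /eqP.
by exists (rev s); rewrite ?revK // mem_bool_seqs size_rev.
Qed.

Lemma card_tuple_count n (P : pred (seq bool)) :
  #|[set t : n.-tuple bool | P t]| = count P (bool_seqs n).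
Proof.
rewrite cardsE cardE /enum_mem size_filter.
rewrite (@eq_count _ _ (P \o val)) => [|t]; last by rewrite !inE.
rewrite -count_map; apply/permP/perm_bool_seqs => [|s].
  by rewrite (map_inj_uniq val_inj) -enumT enum_uniq.
apply/mapP/eqP => [[t _ ->]|sn]; first exact: size_tuple.
by exists (Tuple (introT eqP sn)); rewrite ?mem_enum.
Qed.

Definition ballot (s : seq bool) : bool :=
  [forall k : 'I_(size s).+1, (0 < k) ==> (zeros (take k s) < ones (take k s))].

Lemma ballotP s :
  reflect (forall k, 0 < k <= size s -> zeros (take k s) < ones (take k s)) (ballot s).
Proof.
apply: (iffP forallP) => [H k /andP[k0 ks]|H k].
  by have /implyP := H (Ordinal (ks : k < (size s).+1)); apply.
by apply/implyP => k0; apply: H; rewrite k0 -ltnS ltn_ord.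
Qed.

Lemma ballot_revP s : reflect
  (forall k, 0 < k <= size s -> zeros (drop (size s - k) s) < ones (drop (size s - k) s))
  (ballot (rev s)).
Proof.
apply: (iffP (ballotP _)); rewrite size_rev => H k /H;
  by rewrite take_rev /zeros /ones !count_rev.
Qed.

Lemma bidirectional_ballotE s : bidirectional_ballot s = ballot s && ballot (rev s).
Proof.
apply/forallP/andP => [H|[/ballotP Hl /ballot_revP Hr] k].
  split; [apply/ballotP | apply/ballot_revP] => k /andP[k0 ks];
    by have /implyP/(_ k0)/andP[] := H (Ordinal (ks : k < (size s).+1)).
by apply/implyP => k0; rewrite Hl ?Hr // k0 -ltnS ltn_ord.
Qed.

Definition bitwise_le (s t : seq bool) : bool := all2 implb s t.

Definition up_closed (P : pred (seq bool)) : Prop :=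
  forall s t, bitwise_le s t -> P s -> P t.

Lemma bitwise_le_refl s : bitwise_le s s.
Proof. by elim: s => //= b s ->; rewrite implybb. Qed.

Lemma bitwise_le_cons b c s t :
  bitwise_le (b :: s) (c :: t) = (b ==> c) && bitwise_le s t.
Proof. by []. Qed.

Lemma bitwise_le_size s t : bitwise_le s t -> size s = size t.
Proof. by elim: s t => [|b s IH] [|c t] //= /andP[_ /IH ->]. Qed.

Lemma bitwise_le_take k s t : bitwise_le s t -> bitwise_le (take k s) (take k t).
Proof. by elim: s t k => [|b s IH] [|c t] [|k] //= /andP[-> /IH]; apply. Qed.

Lemma bitwise_le_drop k s t : bitwise_le s t -> bitwise_le (drop k s) (drop k t).
Proof. by elim: s t k => [|b s IH] [|c t] [|k] //= /andP[_ /IH]. Qed.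

Lemma bitwise_le_count s t :
  bitwise_le s t -> ones s <= ones t /\ zeros t <= zeros s.
Proof.
rewrite /ones /zeros; elim: s t => [|b s IH] [|c t] //= /andP[bc /IH].
by case: b c bc => [] [] //=; lia.
Qed.

Lemma up_closed_ballot : up_closed ballot.
Proof.
move=> s t st /ballotP H; apply/ballotP => k; rewrite -(bitwise_le_size st) => /H.
have [] := bitwise_le_count (bitwise_le_take k st); lia.
Qed.

Lemma up_closed_ballot_rev : up_closed (ballot \o rev).
Proof.
move=> s t st /ballot_revP H; apply/ballot_revP => k; rewrite -(bitwise_le_size st) => /H.
have [] := bitwise_le_count (bitwise_le_drop (size s - k) st); lia.
Qed.

Lemma up_closed_cons (P : pred (seq bool)) b :
  up_closed P -> up_closed (fun s => P (b :: s)).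
Proof. by move=> HP s t st; apply: HP; rewrite bitwise_le_cons implybb. Qed.

Lemma count_cons_false_le (P : pred (seq bool)) l : up_closed P ->
  count (fun s => P (false :: s)) l <= count (fun s => P (true :: s)) l.
Proof. by move=> HP; apply: sub_count => s; apply: HP; exact: bitwise_le_refl. Qed.

Lemma chebyshev_sum2 a0 a1 b0 b1 :
  a0 <= a1 -> b0 <= b1 -> (a0 + a1) * (b0 + b1) <= 2 * (a0 * b0 + a1 * b1).
Proof. by move=> ha hb; nia. Qed.

Theorem harris_inequality n (P Q : pred (seq bool)) : up_closed P -> up_closed Q ->
  count P (bool_seqs n) * count Q (bool_seqs n) <= count (predI P Q) (bool_seqs n) * 2 ^ n.
Proof.
elim: n P Q => [|n IH] P Q HP HQ; first by rewrite /=; case: (P [::]); case: (Q [::]).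
rewrite !count_bool_seqsS expnS.
have IH0 := IH _ _ (up_closed_cons (b:=false) HP) (up_closed_cons (b:=false) HQ).
have IH1 := IH _ _ (up_closed_cons (b:=true) HP) (up_closed_cons (b:=true) HQ).
apply: leq_trans (chebyshev_sum2 (count_cons_false_le _ HP) (count_cons_false_le _ HQ)) _.
by rewrite mulnCA leq_pmul2l // mulnDl; exact: leq_add IH0 IH1.
Qed.

Lemma ones_cons b s : ones (b :: s) = b + ones s. Proof. by []. Qed.
Lemma zeros_cons b s : zeros (b :: s) = ~~ b + zeros s. Proof. by []. Qed.

Lemma ones_add_zeros s : ones s + zeros s = size s.
Proof. by rewrite /ones /zeros count_predC. Qed.

Fixpoint stays_nonneg (j : nat) (s : seq bool) : bool :=
  if s is b :: s' then
    if b then stays_nonneg j.+1 s' else (0 < j) && stays_nonneg j.-1 s'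
  else true.

Lemma stays_nonnegP j s :
  reflect (forall k, zeros (take k s) <= ones (take k s) + j) (stays_nonneg j s).
Proof.
elim: s j => [|b s IH] j /=; first by constructor.
case: b; last case: j => [|j] /=.
- apply: (iffP (IH j.+1)) => H k; [case: k => [|k] //; have := H k | have := H k.+1];
    by rewrite take_cons zeros_cons ones_cons /=; lia.
- by constructor => /(_ 1); rewrite /= take0.
- apply: (iffP (IH j)) => H k; [case: k => [|k] //; have := H k | have := H k.+1];
    by rewrite take_cons zeros_cons ones_cons /=; lia.
Qed.

Lemma ballot_cons b s : ballot (b :: s) = b && stays_nonneg 0 s.
Proof.
case: b; last by apply/ballotP => /(_ 1 isT); rewrite /= take0.
apply/ballotP/stays_nonnegP => H k.
  have := H (minn k (size s)).+1; rewrite take_cons take_min take_size zeros_cons ones_cons /=.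
  by rewrite ltnS geq_minr; lia.
case: k => [|k] // _; have := H k; rewrite take_cons zeros_cons ones_cons /=; lia.
Qed.

Definition end_window (j : nat) (s : seq bool) : bool :=
  (zeros s <= ones s + j) && (ones s <= zeros s + j.+1).

Lemma count_add_eq (T : Type) (a b c d : pred T) l :
  (forall x, a x + b x = c x + d x) -> count a l + count b l = count c l + count d l.
Proof. by move=> abcd; elim: l => //= x l IH; have := abcd x; lia. Qed.

Lemma end_window_cons j s :
  end_window j (false :: s) + end_window j (true :: s) =
  ((0 < j) && end_window j.-1 s) + end_window j.+1 s.
Proof.
rewrite /end_window !zeros_cons !ones_cons /=.
by case: j => [|j] /=; move: (zeros s) (ones s) => z o; do ![case: leqP => ?]; lia.
Qed.

(* Reflection principle: both sides satisfy the recursion of [end_window_cons]. *)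
Lemma count_stays_nonneg m j :
  count (stays_nonneg j) (bool_seqs m) = count (end_window j) (bool_seqs m).
Proof.
elim: m j => [|m IH] j; first by [].
rewrite !count_bool_seqsS (count_add_eq _ (end_window_cons j)).
by case: j => [|j] /=; rewrite ?count_pred0 !IH.
Qed.

Lemma end_window0E s : end_window 0 s = (ones s == uphalf (size s)).
Proof.
rewrite /end_window -ones_add_zeros uphalf_half.
move: (ones s) (zeros s) => o z; have := odd_double_half (o + z).
move: (odd _) ((o + z)./2) => [] q /= h; apply/andP/eqP => [[]|oq]; lia.
Qed.

Lemma count_ones_eq m (k : nat) : count (fun s => ones s == k) (bool_seqs m) = 'C(m, k).
Proof.
elim: m k => [|m IH] k; first by case: k.
rewrite count_bool_seqsS; case: k => [|k].
  rewrite (eq_count (a1 := fun s => ones (true :: s) == 0) (a2 := pred0)) //.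
  by rewrite count_pred0 addn0 !bin0 -(bin0 m) -IH.
by rewrite binS -!IH.
Qed.

Lemma count_ballot m : count ballot (bool_seqs m.+1) = 'C(m, uphalf m).
Proof.
rewrite count_bool_seqsS !(eq_count (ballot_cons _)) count_pred0 /= count_stays_nonneg.
rewrite -count_ones_eq; apply: eq_in_count => s.
by rewrite mem_bool_seqs end_window0E => /eqP->.
Qed.

Lemma mul_central_binomS k : k.+1 * 'C(k.*2.+2, k.+1) = 2 * k.*2.+1 * 'C(k.*2, k).
Proof.
have sym : 'C(k.*2.+1, k) = 'C(k.*2.+1, k.+1).
  by rewrite -bin_sub; [congr 'C(_, _) | ]; lia.
rewrite -mul_bin_diag /= sym -mulnA (mul_bin_diag k.*2.+1); lia.
Qed.

Lemma central_binom_lower k : 16 ^ k <= 'C(k.*2, k) ^ 2 * (4 * k + 1).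
Proof.
elim: k => // k IH.
rewrite -(@leq_pmul2l (k.+1 ^ 2)) ?expn_gt0 // doubleS mulnA -expnMn mul_central_binomS.
have poly : 16 * k.+1 ^ 2 * (4 * k + 1) <= 4 * k.*2.+1 ^ 2 * (4 * k.+1 + 1).
  rewrite -addnn; nia.
rewrite [16 ^ _]expnS mulnA.
apply: leq_trans (_ : k.+1 ^ 2 * 16 * ('C(k.*2, k) ^ 2 * (4 * k + 1)) <= _).
  by rewrite leq_mul2l IH orbT.
set c := 'C(k.*2, k).
have -> : k.+1 ^ 2 * 16 * (c ^ 2 * (4 * k + 1)) = c ^ 2 * (16 * k.+1 ^ 2 * (4 * k + 1)).
  by ring.
have -> : (2 * k.*2.+1 * c) ^ 2 * (4 * k.+1 + 1) = c ^ 2 * (4 * k.*2.+1 ^ 2 * (4 * k.+1 + 1)).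
  by ring.
by rewrite leq_mul2l poly orbT.
Qed.

Lemma binom_half_lower m : 4 ^ m <= 8 * m.+1 * 'C(m, uphalf m) ^ 2.
Proof.
move: (odd_double_half m); move: (odd m) (m./2) => b k <-.
have pow : 4 ^ k.*2 = 16 ^ k by rewrite -mul2n expnM.
have := central_binom_lower k; case: b; rewrite ?add0n ?add1n ?uphalf_double /=.
- rewrite doubleK binS [4 ^ _]expnS pow.
  have : 'C(k.*2, k) ^ 2 <= ('C(k.*2, k.+1) + 'C(k.*2, k)) ^ 2 by rewrite leq_exp2r ?leq_addl.
  move: ('C(k.*2, k) ^ 2) (_ ^ 2) (16 ^ k) => x y t; rewrite -addnn; nia.
- rewrite pow; move: ('C(k.*2, k) ^ 2) (16 ^ k) => x t; rewrite -addnn; nia.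
Qed.

Lemma B_count_ballot n : B n = count (predI ballot (ballot \o rev)) (bool_seqs n).
Proof. by rewrite /B card_tuple_count; apply: eq_count => s; rewrite bidirectional_ballotE. Qed.

Theorem proposition13 :
  exists c N : nat, 0 < c /\ forall n : nat, N <= n -> 2 ^ n <= c * n * B n.
Proof.
exists 32, 1; split => // -[|m] // _.
have := harris_inequality m.+1 up_closed_ballot up_closed_ballot_rev.
rewrite count_bool_seqs_rev count_ballot -B_count_ballot mulnn => harris.
rewrite -(@leq_pmul2r (2 ^ m.+1)) ?expn_gt0 // -mulnA.
apply: leq_trans (leq_mul (leqnn _) harris).
have -> : 2 ^ m.+1 * 2 ^ m.+1 = 4 * 4 ^ m by rewrite -expnMn expnS.
by rewrite -[32]/(4 * 8) -!mulnA leq_mul2l /= mulnA binom_half_lower.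
Qed.
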